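(* Let $G$ be a plane graph whose set of vertices has no accumulation point in $\mathbb{R}^2$ and which has bounded vertex degrees, and suppose $G$ is hyperbolic and weakly non-amenable. If every face of $G$ is contained inside a geodetic cycle, then $G$ has bounded codegree, i.e. $\Delta(G^* )<\infty$.
   Context: A plane graph is a graph with a fixed embedding in $\mathbb{R}^2$ with no two edges crossing. A face is a connected component of $\mathbb{R}^2$ minus the image of the graph; its length $|F|$ is the number of edges in its boundary (the vertices and edges mapped into its closure); it is bounded if its length is finite. $\Delta(G^* ):=\sup\{|F| : F\text{ a bounded face}\}$. A set is inside a cycle $C$ if each of its points lies on $C$ or in the bounded component of $\mathbb{R}^2\setminus C$. For vertices $x,y$ on a cycle $C$, $xCy$ and $yCx$ are the two arcs of $C$ between them; $C$ is a geodetic cycle if for every $x,y\in C$ at least one of $xCy,yCx$ is a geodesic of $G$. For finite $S\subset V(G)$, $\partial S$ is the set of vertices outside $S$ adjacent to a vertex of $S$; $G$ is weakly non-amenable if there is a monotone increasing diverging $f:\mathbb{N}\to\mathbb{N}$ with $|S|\le f(|\partial S|)$ for all non-empty finite $S$. A graph is hyperbolic if there is $\delta\ge0$ such that in each connected component every geodetic triangle (three vertices joined pairwise by geodesics) has each side in the $\delta$-neighbourhood of the union of the other two. *)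

From HB Require Import structures.
From mathcomp Require Import all_boot all_order all_algebra.
From mathcomp Require Import all_classical all_reals.
From mathcomp Require Import topology Rstruct Rstruct_topology.
From Stdlib Require Import Reals List.
Import ListNotations.

Set Implicit Arguments.
Unset Strict Implicit.
Unset Printing Implicit Defensive.

Local Open Scope classical_set_scope.

Definition plane_pt : Type := (R * R)%type.

Definition unit_I : set R := [set t | (0 <= t <= 1)%R].

Section Graph.
Variables (V E : Type) (src tgt : E -> V).

Definition simple_graph : Prop :=
  (forall e, src e <> tgt e) /\
  (forall e e', (src e = src e' /\ tgt e = tgt e') \/
                (src e = tgt e' /\ tgt e = src e') -> e = e').

Definition adj (u v : V) : Prop :=
  exists e, (src e = u /\ tgt e = v) \/ (src e = v /\ tgt e = u).

Definition bounded_degree : Prop :=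
  exists D : nat, forall v : V, exists l : list E,
    (length l <= D)%coq_nat /\ forall e, (src e = v \/ tgt e = v) -> In e l.

Fixpoint is_walk (p : list V) : Prop :=
  match p with
  | [] => False
  | [_] => True
  | x :: ((y :: _) as q) => adj x y /\ is_walk q
  end.

Definition is_geodesic (p : list V) : Prop :=
  is_walk p /\
  forall x0 (q : list V), is_walk q -> hd x0 q = hd x0 p ->
    last q x0 = last p x0 -> (length p <= length q)%coq_nat.

Definition dist_le (u v : V) (n : nat) : Prop :=
  exists p : list V, is_walk p /\ hd u p = u /\ last p u = v /\
    (length p <= n.+1)%coq_nat.

(* hyperbolicity: every geodetic triangle is delta-thin (measured on vertices;
   distances are integers, so delta may be taken in nat). *)
Definition hyperbolic : Prop :=
  exists delta : nat,
    forall x0 (P Q S : list V), is_geodesic P -> is_geodesic Q -> is_geodesic S ->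
      last P x0 = hd x0 Q -> last Q x0 = hd x0 S -> last S x0 = hd x0 P ->
      forall v, In v P -> exists w, (In w Q \/ In w S) /\ dist_le v w delta.

Definition weakly_non_amenable : Prop :=
  exists f : nat -> nat,
    (forall m n, (m <= n)%N -> (f m <= f n)%N) /\
    (forall M, exists n, (M <= f n)%N) /\
    forall S B : list V, S <> [] -> NoDup S -> NoDup B ->
      (forall w, In w B <-> (~ In w S /\ exists u, In u S /\ adj u w)) ->
      (length S <= f (length B))%N.

Definition is_cycle (n : nat) (c : nat -> V) : Prop :=
  (3 <= n)%N /\
  (forall i j, (i < n)%N -> (j < n)%N -> c i = c j -> i = j) /\
  (forall i, (i < n)%N -> adj (c i) (c ((i.+1) %% n))).

(* the arc xCy from x = c i to y = c j, as a walk *)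
Definition cycle_arc (n : nat) (c : nat -> V) (i j : nat) : list V :=
  map (fun k => c ((i + k) %% n)) (seq 0 (((j + n - i) %% n).+1)).

Definition geodetic_cycle (n : nat) (c : nat -> V) : Prop :=
  is_cycle n c /\
  forall i j, (i < n)%N -> (j < n)%N ->
    is_geodesic (cycle_arc n c i j) \/ is_geodesic (cycle_arc n c j i).

Definition cycle_edge (n : nat) (c : nat -> V) (e : E) : Prop :=
  exists i, (i < n)%N /\
    ((src e = c i /\ tgt e = c ((i.+1) %% n)) \/
     (tgt e = c i /\ src e = c ((i.+1) %% n))).

Variables (pos : V -> plane_pt) (arc : E -> R -> plane_pt).

Definition plane_embedding : Prop :=
  (forall u v, pos u = pos v -> u = v) /\
  (forall e, {within unit_I, continuous (arc e)}) /\
  (forall e s t, unit_I s -> unit_I t -> arc e s = arc e t -> s = t) /\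
  (forall e, arc e 0%R = pos (src e) /\ arc e 1%R = pos (tgt e)) /\
  (forall v e t, unit_I t -> arc e t = pos v -> v = src e \/ v = tgt e) /\
  (forall e e' s t, e <> e' -> unit_I s -> unit_I t -> arc e s = arc e' t ->
     exists v, arc e s = pos v /\ (v = src e \/ v = tgt e) /\
               (v = src e' \/ v = tgt e')).

Definition no_vertex_accumulation : Prop :=
  forall p : plane_pt, ~ limit_point (range pos) p.

Definition graph_image : set plane_pt :=
  [set p | (exists v, p = pos v) \/ (exists e t, unit_I t /\ p = arc e t)].

Definition edge_image (e : E) : set plane_pt := arc e @` unit_I.

Definition is_face (F : set plane_pt) : Prop :=
  exists p, ~ graph_image p /\ F = connected_component (~` graph_image) p.

Definition face_boundary_edges (F : set plane_pt) : set E :=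
  [set e | edge_image e `<=` closure F].

Definition finite_list_set (T : Type) (A : set T) : Prop :=
  exists l : list T, forall x, A x -> In x l.

Definition at_most (T : Type) (A : set T) (N : nat) : Prop :=
  exists l : list T, (length l <= N)%coq_nat /\ forall x, A x -> In x l.

(* Delta(G^* ) < oo : the lengths of bounded faces are uniformly bounded *)
Definition bounded_codegree : Prop :=
  exists N : nat, forall F, is_face F ->
    finite_list_set (face_boundary_edges F) ->
    at_most (face_boundary_edges F) N.

Definition bounded_point_set (A : set plane_pt) : Prop :=
  exists M : R, forall q, A q -> (Rabs q.1 <= M /\ Rabs q.2 <= M)%R.

Definition cycle_image (n : nat) (c : nat -> V) : set plane_pt :=
  [set p | (exists i, (i < n)%N /\ p = pos (c i)) \/
           (exists e, cycle_edge n c e /\ edge_image e p)].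

Definition inside_cycle (n : nat) (c : nat -> V) (A : set plane_pt) : Prop :=
  forall p, A p -> cycle_image n c p \/
    (~ cycle_image n c p /\
     bounded_point_set (connected_component (~` cycle_image n c) p)).

End Graph.

(* Hyperbolicity bounds the length of geodetic cycles: if a geodetic cycle C
   had n > 6 delta + 11 vertices, cutting it into three arcs of about n/3 edges
   would give a geodetic triangle, and the vertex delta + 1 steps along one arc
   would lie within delta of the other two arcs, a shortcut contradicting
   geodeticity. A face F lies inside such a short cycle C, hence in a bounded
   component K of the complement of C. Since the vertices do not accumulate, K
   contains only finitely many vertices S, and every neighbour of S outside S
   lies on C, so weak non-amenability bounds |S| by f(|C|). Every boundary edge
   of F has an end in S or on C, and bounded degree then bounds the length of F. *)

From HB Require Import structures.
From Stdlib Require Import Reals List.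
From mathcomp Require Import all_boot all_classical all_reals.
From mathcomp Require Import topology Rstruct Rstruct_topology.
From Stdlib Require Import Classical.
From mathcomp Require Import all_order all_algebra finmap normedtype zify.

Import Order.TTheory GRing.Theory Num.Theory.

Set Implicit Arguments.
Unset Strict Implicit.

Lemma exists_nodup_filter (T : Type) (l : list T) (P : T -> Prop) :
  exists l', [/\ NoDup l', forall x, In x l' <-> In x l /\ P x
                 & (length l' <= length l)%N].
Proof.
elim: l => [|a l [l' [nd Hl' len]]]; first by exists [::]; split; [constructor|firstorder|].
have [[Pa na]|keep] := classic (P a /\ ~ In a l').
- exists (a :: l'); split => /=; [by constructor|move=> x|by []].
  by rewrite Hl'; split; [case=> [<-|]|]; tauto.
- exists l'; split => //=; [move=> x|by apply: leqW].
  split => [/Hl'|[[<-|hx] Px]]; [tauto| |by apply/Hl'].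
  by apply: NNPP => /(conj Px).
Qed.

Section Walks.
Variables (V E : Type) (src tgt : E -> V).

Lemma adj_sym u v : adj src tgt u v -> adj src tgt v u.
Proof. by case=> e [[h1 h2]|[h1 h2]]; exists e; [right|left]. Qed.

Lemma is_walk_rcons p x : is_walk src tgt p ->
  (forall x0, adj src tgt (List.last p x0) x) -> is_walk src tgt (p ++ [:: x]).
Proof.
elim: p => [//|a [|b p] IH] /=; first by move=> _ /(_ a).
by move=> [hab hw] hl; split => //; apply: IH.
Qed.

Lemma last_rev (p : list V) x0 : List.last (List.rev p) x0 = hd x0 p.
Proof. by case: p => [//|a p]; exact: List.last_last. Qed.

Lemma hd_rev (p : list V) x0 : hd x0 (List.rev p) = List.last p x0.
Proof. by rewrite -{2}(List.rev_involutive p) last_rev. Qed.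

Lemma is_walk_rev p : is_walk src tgt p -> is_walk src tgt (List.rev p).
Proof.
elim: p => [//|a [|b p] IH] // [hab hw].
apply: (@is_walk_rcons (List.rev (b :: p))); first exact: IH.
by move=> x0; rewrite last_rev; apply: adj_sym.
Qed.

Lemma is_walk_map_seq (g : nat -> V) m a :
  (forall k, (a <= k < a + m)%N -> adj src tgt (g k) (g k.+1)) ->
  is_walk src tgt (List.map g (List.seq a m.+1)).
Proof.
elim: m a => [//|m IH] a H; split; first by apply: H; lia.
by apply: IH => k hk; apply: H; lia.
Qed.

Lemma geodesic_length_le p q x0 : is_geodesic src tgt p -> is_walk src tgt q ->
  hd x0 q = hd x0 p -> List.last q x0 = List.last p x0 -> (length p <= length q)%coq_nat.
Proof. by case=> _; apply. Qed.

End Walks.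

Definition arclen (n i j : nat) : nat := ((j + n - i) %% n)%N.

Lemma arclen_le n i j : (j < n)%N -> (i <= j)%N -> arclen n i j = (j - i)%N.
Proof.
move=> hj hij; rewrite /arclen.
have -> : (j + n - i = (j - i) + n)%N by lia.
by rewrite modnDr modn_small //; lia.
Qed.

Lemma arclen_gt n i j : (i < n)%N -> (j < i)%N -> arclen n i j = (j + n - i)%N.
Proof. by move=> hi hji; rewrite /arclen modn_small //; lia. Qed.

Section CycleArcs.
Variables (V E : Type) (src tgt : E -> V) (n : nat) (c : nat -> V).

Lemma length_cycle_arc i j : length (cycle_arc n c i j) = (arclen n i j).+1.
Proof. by rewrite /cycle_arc List.length_map List.length_seq. Qed.

Lemma hd_cycle_arc i j x0 : (i < n)%N -> hd x0 (cycle_arc n c i j) = c i.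
Proof. by move=> hi /=; rewrite addn0 modn_small. Qed.

Lemma last_cycle_arc i j x0 : (i < n)%N -> (j < n)%N ->
  List.last (cycle_arc n c i j) x0 = c j.
Proof.
move=> hi hj; rewrite /cycle_arc List.seq_S List.map_app List.last_last; congr c.
case: (leqP i j) => hij; rewrite -/(arclen n i j).
- by rewrite arclen_le // subnKC // modn_small.
- by rewrite arclen_gt // (_ : i + _ = j + n)%N ?modnDr ?modn_small //; lia.
Qed.

Lemma in_cycle_arc i j w : In w (cycle_arc n c i j) <->
  exists2 k, (k <= arclen n i j)%N & w = c ((i + k) %% n).
Proof.
rewrite List.in_map_iff /arclen; split.
- by case=> k [<- /List.in_seq hk]; exists k => //; lia.
- by case=> k hk ->; exists k; split => //; apply/List.in_seq; lia.
Qed.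

Lemma is_walk_cycle_arc i j : is_cycle src tgt n c -> is_walk src tgt (cycle_arc n c i j).
Proof.
case=> hn [_ hadj]; apply: is_walk_map_seq => k _.
have := hadj ((i + k) %% n)%N; rewrite ltn_pmod; last lia.
by move=> /(_ isT); rewrite -addn1 modnDml addn1 addnS.
Qed.

Hypothesis hgc : geodetic_cycle src tgt n c.

Lemma geodetic_cycle_walk a b q x0 L : (a < n)%N -> (b < n)%N ->
  is_walk src tgt q -> hd x0 q = c a -> List.last q x0 = c b ->
  (length q <= L.+1)%coq_nat ->
  (arclen n a b <= L)%N \/ (arclen n b a <= L)%N.
Proof.
case: hgc => _ hg ha hb hq hq1 hq2 hl.
case: (hg a b ha hb) => hgeo; [left|right].
- have := geodesic_length_le (x0 := x0) hgeo hq.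
  rewrite hd_cycle_arc // last_cycle_arc // length_cycle_arc => /(_ hq1 hq2); lia.
- have := geodesic_length_le (x0 := x0) hgeo (is_walk_rev hq).
  rewrite hd_cycle_arc // last_cycle_arc // length_cycle_arc hd_rev last_rev.
  by move=> /(_ hq2 hq1); rewrite List.length_rev; lia.
Qed.

Lemma geodesic_short_cycle_arc i j : (i < n)%N -> (j < n)%N ->
  (arclen n i j < arclen n j i)%N -> is_geodesic src tgt (cycle_arc n c i j).
Proof.
case: hgc => hc hg hi hj hlt; case: (hg i j hi hj) => // hgeo; exfalso.
have := geodesic_length_le (x0 := c i) hgeo (is_walk_rev (is_walk_cycle_arc i j hc)).
rewrite hd_rev last_rev !hd_cycle_arc // !last_cycle_arc // List.length_rev.
by rewrite !length_cycle_arc => /(_ erefl erefl); lia.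
Qed.

End CycleArcs.

(* [hyperbolic src tgt] unfolds to [exists delta, thin_triangles src tgt delta]. *)
Definition thin_triangles (V E : Type) (src tgt : E -> V) (delta : nat) : Prop :=
  forall x0 (P Q S : list V),
    is_geodesic src tgt P -> is_geodesic src tgt Q -> is_geodesic src tgt S ->
    List.last P x0 = hd x0 Q -> List.last Q x0 = hd x0 S -> List.last S x0 = hd x0 P ->
    forall v, In v P -> exists w, (In w Q \/ In w S) /\ dist_le src tgt v w delta.

Lemma geodetic_cycle_length_le (V E : Type) (src tgt : E -> V) delta n (c : nat -> V) :
  thin_triangles src tgt delta -> geodetic_cycle src tgt n c -> (n <= 6 * delta + 11)%N.
Proof.
move=> thin hgc; rewrite leqNgt; apply/negP => hn.
pose k := (n %/ 3)%N.
have hk : (k * 3 <= n < k * 3 + 3)%N.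
  by have := divn_eq n 3; have := ltn_pmod n (isT : (0 < 3)%N); rewrite -/k; lia.
have arc_geo := geodesic_short_cycle_arc hgc.
have gP := arc_geo 0 k ltac:(lia) ltac:(lia) ltac:(rewrite arclen_le ?arclen_gt; lia).
have gQ := arc_geo k (k + k) ltac:(lia) ltac:(lia)
  ltac:(rewrite arclen_le ?arclen_gt; lia).
have gS := arc_geo (k + k) 0 ltac:(lia) ltac:(lia)
  ltac:(rewrite arclen_gt ?arclen_le; lia).
have inP : In (c delta.+1) (cycle_arc n c 0 k).
  by apply/in_cycle_arc; exists delta.+1; rewrite ?arclen_le ?modn_small //; lia.
have [w [hw [q [hq [hq1 [hq2 hql]]]]]] := thin (c 0) _ _ _ gP gQ gS
  ltac:(rewrite last_cycle_arc ?hd_cycle_arc //; lia)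
  ltac:(rewrite last_cycle_arc ?hd_cycle_arc //; lia)
  ltac:(rewrite last_cycle_arc ?hd_cycle_arc //; lia) _ inP.
(* [w] lies on the arc from [c k] round to [c 0] and is joined to
   [c (delta + 1)] by a walk of at most delta edges, while both arcs of the
   cycle between these two vertices are longer. *)
have [t ht hwt] : exists2 t, (k <= t < n)%N \/ t = 0%N & w = c t.
  case: hw => /in_cycle_arc [j hj ->].
  - exists (k + j)%N; last by rewrite modn_small //; move: hj; rewrite arclen_le; lia.
    by move: hj; rewrite arclen_le; lia.
  - move: hj; rewrite arclen_gt; [move=> hj|lia|lia].
    case: (ltnP (k + k + j) n) => hj2.
      by exists (k + k + j)%N; [lia|rewrite modn_small].
    exists 0%N; first by right.
    by rewrite (_ : k + k + j = 0 + n)%N ?modnDr ?mod0n //; lia.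
rewrite hwt in hq2.
have := geodetic_cycle_walk (a := delta.+1) (b := t) hgc _ _ hq hq1 hq2 hql.
case: ht => [ht|->] /(_ ltac:(lia) ltac:(lia)).
- by rewrite arclen_le ?arclen_gt; lia.
- by rewrite arclen_gt ?arclen_le; lia.
Qed.

Section Counting.
Variables (V E : Type) (src tgt : E -> V).

Lemma weakly_non_amenable_boundary_in : weakly_non_amenable src tgt ->
  exists f : nat -> nat, {homo f : m p / (m <= p)%N} /\
    forall S C : list V, NoDup S ->
      (forall u w, In u S -> adj src tgt u w -> ~ In w S -> In w C) ->
      (length S <= f (length C))%N.
Proof.
case=> f [fmono [_ hf]]; exists f; split => // S C ndS hSC.
have [-> //|S0] := classic (S = [::]).
have [B [ndB inB lenB]] :=
  exists_nodup_filter C (fun w => ~ In w S /\ exists u, In u S /\ adj src tgt u w).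
have memB w : In w B <-> ~ In w S /\ exists u, In u S /\ adj src tgt u w.
  rewrite inB; split => [[_ //]|[hw [u [hu huw]]]].
  by split; [exact: hSC hu huw hw|split => //; exists u].
exact: leq_trans (hf S B S0 ndS ndB memB) (fmono _ _ lenB).
Qed.

Lemma bounded_degree_incident : bounded_degree src tgt ->
  exists D, forall L : list V, exists es : list E,
    (length es <= D * length L)%N /\ forall e, In (src e) L -> In e es.
Proof.
case=> D hD; exists D; elim => [|v L [es [hlen hes]]]; first by exists [::].
have [l [hl1 hl2]] := hD v.
exists (l ++ es); split; first by rewrite List.length_app /=; lia.
by move=> e /= [hv|hL]; apply/List.in_or_app; [left; apply: hl2; left|right; apply: hes].
Qed.

End Counting.

Local Open Scope classical_set_scope.
Local Open Scope ring_scope.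

Lemma unit_I_itv : unit_I = `[0%R, 1%R]%classic.
Proof.
rewrite set_itvcc; apply/seteqP; split => x /=.
- by case=> /RleP -> /RleP ->.
- by move=> /andP[/RleP h0 /RleP h1].
Qed.

Lemma nbhs_plane (p : plane_pt) (U : set plane_pt) :
  nbhs p U <-> exists2 e : R, 0 < e & forall q : plane_pt,
     `|p.1 - q.1| < e -> `|p.2 - q.2| < e -> U q.
Proof.
rewrite nbhs_ballP; split.
- by case=> e /= e0 H; exists e => // q h1 h2; apply: H.
- by case=> e e0 H; exists e => //= q [h1 h2]; apply: H.
Qed.

Lemma plane_hausdorff : hausdorff_space plane_pt.
Proof.
move=> p q hcl.
have coord (f : plane_pt -> R) : f = fst \/ f = snd -> f p = f q.
  move=> hf; apply: Rhausdorff => A B /nbhs_ballP[e /= e0 hA] /nbhs_ballP[d /= d0 hB].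
  have [z [/= Az Bz]] : [set z : plane_pt | A (f z)] `&` [set z | B (f z)] !=set0.
    by apply: hcl; apply/nbhs_plane; [exists e|exists d] => // z h1 h2;
      [apply: hA|apply: hB]; case: hf => ->.
  by exists (f z).
case: p q hcl coord => a b [a' b'] _ coord.
by have /= -> := coord fst (or_introl erefl); have /= -> := coord snd (or_intror erefl).
Qed.

Lemma setX_connected (A B : set R) : connected A -> connected B ->
  connected (A `*` B : set plane_pt).
Proof.
move=> cA cB.
have [[b0 Bb0]|B0] := pselect (B !=set0); last first.
  rewrite (_ : _ `*` _ = set0); first exact: connected0.
  by apply/seteqP; split => // -[x y] [_ By]; apply: B0; exists y.
have [[a0 Aa0]|A0] := pselect (A !=set0); last first.
  rewrite (_ : _ `*` _ = set0); first exact: connected0.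
  by apply/seteqP; split => // -[x y] [Ax _]; apply: A0; exists x.
pose H := (fun x : R => (x, b0) : plane_pt) @` A.
pose Vt (a : R) := (fun y : R => (a, y) : plane_pt) @` B.
have -> : (A `*` B : set plane_pt) = \bigcup_(a in A) (Vt a `|` H).
  apply/seteqP; split.
  - by move=> [x y] [/= Ax By]; exists x => //; left; exists y.
  - by move=> [x y] [a Aa [[z Bz [<- <-]]|[z Az [<- <-]]]].
apply: bigcup_connected; first by exists (a0, b0) => a Aa; right; exists a0.
move=> a Aa; apply: connectedU.
- by exists (a, b0); split; [exists b0|exists a].
- apply: connected_continuous_connected => //; apply: continuous_subspaceT => y.
  exact: (cvg_pair (f := fun=> a) (g := id) (cvg_cst a) cvg_id).
- apply: connected_continuous_connected => //; apply: continuous_subspaceT => x.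
  exact: (cvg_pair (f := id) (g := fun=> b0) cvg_id (cvg_cst b0)).
Qed.

Lemma plane_locally_connected (O : set plane_pt) (x : plane_pt) : nbhs x O ->
  exists N : set plane_pt, [/\ nbhs x N, N `<=` O & connected N].
Proof.
move=> /nbhs_plane [e e0 H].
exists (ball x.1 e `*` ball x.2 e); split.
- by apply/nbhs_plane; exists e.
- by move=> q [h1 h2]; apply: H.
- by apply: setX_connected; rewrite ball_itv; apply/connected_intervalP/interval_is_interval.
Qed.

Lemma closure_sub_component (O F : set plane_pt) p x : open O ->
  F `<=` connected_component O p -> O x -> closure F x ->
  connected_component O p x.
Proof.
move=> oO FK Ox clFx.
have [N [nbN NO cN]] := plane_locally_connected (open_nbhs_nbhs (conj oO Ox)).
have [q [Fq Nq]] := clFx N nbN.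
rewrite (same_connected_component (FK q Fq)).
exact: connected_component_max Nq NO cN _ (nbhs_singleton nbN).
Qed.

Lemma preimage_list (A : Type) (B : eqType) (g : A -> B) (s : seq B) :
  injective g -> exists l : list A, forall a, g a \in s -> In a l.
Proof.
move=> ginj; elim: s => [|b s [l hl]]; first by exists [::].
have [[a0 <-]|nb] := classic (exists a, g a = b).
- by exists (a0 :: l) => a; rewrite in_cons => /orP[/eqP/ginj ->|/hl]; [left|right].
- by exists l => a; rewrite in_cons => /orP[/eqP hb|/hl //]; case: nb; exists a.
Qed.

(* [compact_cover] is stated for pointed spaces. *)
HB.instance Definition _ := Pointed.on (R * R)%type.

Lemma vertices_in_square (V : Type) (pos : V -> plane_pt) (M : R) :
  injective pos -> no_vertex_accumulation pos ->
  exists l : list V, forall v, (`[- M, M] `*` `[- M, M]) (pos v) -> In v l.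
Proof.
move=> inj nacc.
pose Sq : set plane_pt := `[- M, M] `*` `[- M, M].
have : cover_compact Sq by rewrite -(@compact_cover plane_pt); apply: compact_setX; exact: segment_compact.
pose isolated x y := exists U : set plane_pt,
  [/\ open U, U x, forall v, U (pos v) -> pos v = x & U y].
move=> /(_ _ Sq isolated) [].
- move=> x _; rewrite openE => y [U [oU Ux hU Uy]].
  by apply: filterS (open_nbhs_nbhs (conj oU Uy)) => z Uz; exists U.
- move=> x Sqx; exists x => //.
  have := nacc x; rewrite not_limit_pointE => -[X]; rewrite nbhsE => -[U [oU Ux] UX] hX.
  exists U; split => // v Uv.
  by apply: hX; split; [exists v|apply: UX].
move=> D _ hD; have [l hl] := preimage_list (D : seq plane_pt) inj.
exists l => v /hD [x /= Dx [U [_ _ hU Uv]]]; apply: hl.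
by rewrite -(hU v Uv) in Dx.
Qed.

Lemma bounded_vertex_list (V : Type) (pos : V -> plane_pt) (A : set plane_pt) :
  injective pos -> no_vertex_accumulation pos -> bounded_point_set A ->
  exists S : list V, NoDup S /\ forall v, In v S <-> A (pos v).
Proof.
move=> inj nacc [M hM].
have [l hl] := vertices_in_square M inj nacc.
have [S [ndS inS _]] := exists_nodup_filter l (fun v => A (pos v)).
exists S; split => // v; rewrite inS; split => [[]//|Av]; split => //.
apply: hl; have [/RleP h1 /RleP h2] := hM _ Av; rewrite !RabsE in h1 h2.
by split; rewrite /= in_itv /= -ler_norml.
Qed.

Lemma connected_component_subset (T : topologicalType) (A B : set T) x :
  A `<=` B -> connected_component A x `<=` connected_component B x.
Proof.
move=> AB; have [Ax|nAx] := pselect (A x); last by rewrite connected_component_out.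
apply: connected_component_max; first exact: connected_component_refl.
  by move=> y /connected_component_sub /AB.
exact: component_connected.
Qed.

Definition on_cycle (V : Type) (n : nat) (c : nat -> V) (v : V) : Prop :=
  exists i, (i < n)%N /\ v = c i.

Section Embedding.
Variables (V E : Type) (src tgt : E -> V) (pos : V -> plane_pt) (arc : E -> R -> plane_pt).
Hypothesis emb : plane_embedding src tgt pos arc.

Lemma edge_image_connected e : connected (edge_image arc e).
Proof.
apply: connected_continuous_connected; last by case: emb => _ [].
by rewrite unit_I_itv; exact: segment_connected.
Qed.

Lemma edge_image_closed e : closed (edge_image arc e).
Proof.
apply: compact_closed; first exact: plane_hausdorff.
apply: continuous_compact; first by case: emb => _ [].
by rewrite unit_I_itv; exact: segment_compact.
Qed.

Lemma edge_ends_image e : edge_image arc e (pos (src e)) /\ edge_image arc e (pos (tgt e)).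
Proof.
have [h0 h1] : arc e 0%R = pos (src e) /\ arc e 1%R = pos (tgt e).
  by case: emb => _ [_ [_ [+ _]]]; apply.
by split; [rewrite -h0; exists 0%R|rewrite -h1; exists 1%R];
  rewrite // unit_I_itv /= in_itv /= lexx ler01.
Qed.

Variables (n : nat) (c : nat -> V).

Lemma cycle_image_sub_graph_image :
  cycle_image src tgt pos arc n c `<=` graph_image pos arc.
Proof. by move=> q [[i [_ ->]]|[e [_ [t ht <-]]]]; [left; exists (c i)|right; exists e, t]. Qed.

Lemma cycle_edge_on_cycle e :
  cycle_edge src tgt n c e -> on_cycle n c (src e) /\ on_cycle n c (tgt e).
Proof.
case=> i [hi h]; have hi1 : (i.+1 %% n < n)%N by rewrite ltn_pmod //; case: n hi.
by case: h => -[-> ->]; split; [exists i|exists (i.+1 %% n)%N|exists (i.+1 %% n)%N|exists i].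
Qed.

Lemma pos_notin_cycle_image v :
  ~ on_cycle n c v -> ~ cycle_image src tgt pos arc n c (pos v).
Proof.
case: emb => inj [_ [_ [_ [on_edge _]]]] nv.
case=> [[i [hi /inj hvi]]|[e [/cycle_edge_on_cycle [hs ht] [t It /on_edge]]]].
- by apply: nv; exists i.
- by case/(_ It) => hv; apply: nv; rewrite hv.
Qed.

Lemma edge_image_off_cycle e : ~ on_cycle n c (src e) -> ~ on_cycle n c (tgt e) ->
  edge_image arc e `<=` ~` cycle_image src tgt pos arc n c.
Proof.
case: emb => _ [_ [_ [_ [on_edge cross]]]] ns nt _ [t It <-].
case=> [[i [hi /(on_edge _ _ _ It) h]]|[e' [he' [s Is hs]]]].
  by case: h => h; [apply: ns|apply: nt]; exists i.
have [hs' ht'] := cycle_edge_on_cycle he'.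
have [ee'|ne] := classic (e = e'); first by apply: ns; rewrite ee'.
have [v [_ [hv hv']]] := cross e e' t s ne It Is (esym hs).
by case: hv => hv; [apply: ns|apply: nt]; rewrite -hv; case: hv' => ->.
Qed.

Definition cycle_step (i : nat) (e : E) : Prop :=
  (src e = c i /\ tgt e = c (i.+1 %% n)%N) \/ (tgt e = c i /\ src e = c (i.+1 %% n)%N).

Lemma cycle_image_closed : simple_graph src tgt ->
  closed (cycle_image src tgt pos arc n c).
Proof.
move=> [_ parallel].
(* Without parallel edges each step of the cycle is a single edge, so the image
   is a finite union of compact sets. *)
have step_edge_closed i : closed (\bigcup_(e in cycle_step i) edge_image arc e).
  have [[e0 he0]|none] := classic (exists e, cycle_step i e); last first.
    rewrite (_ : bigcup _ _ = set0); first exact: closed0.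
    by apply/seteqP; split => // p [e he _]; case: none; exists e.
  rewrite (_ : bigcup _ _ = edge_image arc e0); first exact: edge_image_closed.
  apply/seteqP; split => [p [e he]|p hp]; last by exists e0.
  by rewrite (parallel e0 e) //; move: he0 he => [] [-> ->] [] [-> ->]; tauto.
rewrite (_ : cycle_image _ _ _ _ _ _ =
  \bigcup_(i < n) ([set pos (c i)] `|` \bigcup_(e in cycle_step i) edge_image arc e)).
  rewrite bigcup_mkord; apply: closed_bigsetU => i _; apply: closedU => //.
  by apply: compact_closed; [exact: plane_hausdorff|exact: compact_set1].
apply/seteqP; split => p.
- by case=> [[i [hi ->]]|[e [[i [hi he]] hp]]]; exists i => //; [left|right; exists e].
- by case=> i /= hi [->|[e he hp]]; [left; exists i|right; exists e; split => //; exists i].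
Qed.

Lemma cycle_component_adj p u w :
  connected_component (~` cycle_image src tgt pos arc n c) p (pos u) ->
  adj src tgt u w -> ~ on_cycle n c w ->
  connected_component (~` cycle_image src tgt pos arc n c) p (pos w).
Proof.
move=> Ku [e he] nw.
have nu : ~ on_cycle n c u.
  by move=> [i [hi hui]]; apply: (connected_component_sub Ku); left; exists i; rewrite hui.
have [ns nt] : ~ on_cycle n c (src e) /\ ~ on_cycle n c (tgt e) by case: he => -[-> ->].
have [Eu Ew] : edge_image arc e (pos u) /\ edge_image arc e (pos w).
  by have [Es Et] := edge_ends_image e; case: he => -[<- <-].
rewrite (same_connected_component Ku).
exact: connected_component_max Eu (edge_image_off_cycle ns nt) (@edge_image_connected e) _ Ew.
Qed.

Lemma cycle_component_boundary_src (F : set plane_pt) p e : simple_graph src tgt ->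
  F `<=` connected_component (~` cycle_image src tgt pos arc n c) p ->
  face_boundary_edges arc F e ->
  on_cycle n c (src e) \/ connected_component (~` cycle_image src tgt pos arc n c) p (pos (src e)).
Proof.
move=> simple FK eF; have [|nv] := classic (on_cycle n c (src e)); [by left|right].
apply: closure_sub_component FK _ _.
- by apply: closed_openC; exact: cycle_image_closed.
- exact: pos_notin_cycle_image.
- by apply: eF; exact: (edge_ends_image e).1.
Qed.

End Embedding.

Theorem corollary3p2 (V E : Type) (src tgt : E -> V)
  (pos : V -> plane_pt) (arc : E -> R -> plane_pt) :
  simple_graph src tgt ->
  plane_embedding src tgt pos arc ->
  no_vertex_accumulation pos ->
  bounded_degree src tgt ->
  hyperbolic src tgt ->
  weakly_non_amenable src tgt ->
  (forall F, is_face pos arc F ->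
     exists (n : nat) (c : nat -> V),
       geodetic_cycle src tgt n c /\ inside_cycle src tgt pos arc n c F) ->
  bounded_codegree pos arc.
Proof.
move=> simple emb nacc /bounded_degree_incident [D hD] [delta thin]
  /weakly_non_amenable_boundary_in [f [fmono hf]] hface.
have inj : injective pos by case: emb.
pose N := (6 * delta + 11)%N.
exists (D * (f N + N))%N => F hF _.
have [n [c [hgc hin]]] := hface F hF.
have hn : (n <= N)%N := geodetic_cycle_length_le thin hgc.
case: hF => p0 [Gp0 defF].
pose K := connected_component (~` cycle_image src tgt pos arc n c) p0.
have FK : F `<=` K.
  rewrite defF; apply/connected_component_subset/subsetC.
  exact: cycle_image_sub_graph_image.
have [S [ndS inS]] : exists S, NoDup S /\ forall v, In v S <-> K (pos v).
  apply: bounded_vertex_list => //.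
  have Fp0 : F p0 by rewrite defF; exact: connected_component_refl.
  by case: (hin p0 Fp0) => [/cycle_image_sub_graph_image|[]].
pose C := List.map c (List.seq 0 n).
have inC v : In v C <-> on_cycle n c v.
  rewrite List.in_map_iff; split => [[i [<- /List.in_seq hi]]|[i [hi ->]]];
    exists i; split => //; [lia|apply/List.in_seq; lia].
have lenC : length C = n by rewrite List.length_map List.length_seq.
have hS : (length S <= f n)%N.
  rewrite -lenC; apply: hf => // u w /inS Ku huw nSw; apply/inC.
  by apply: NNPP => nw; apply/nSw/inS; exact: cycle_component_adj Ku huw nw.
have [es [hes ines]] := hD (S ++ C).
exists es; split.
  apply/ssrnat.leP; apply: leq_trans hes _; rewrite List.length_app lenC leq_mul2l.
  by rewrite leq_add ?orbT // (leq_trans hS) // fmono.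
move=> e /(cycle_component_boundary_src emb simple FK) hsrc.
by apply: ines; apply/List.in_or_app; case: hsrc => [/inC|/inS]; [right|left].
Qed.
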